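(* Let $k\ge2$, $a_1\in A_1$ and $b_1\in Ab$. Then the map $a\mapsto a_1$, $b\mapsto b_1$ extends to an automorphism of the group $BS(1,k)$.
   Context: $BS(1,k)=\langle a,b\mid b^{-1}ab=a^k\rangle$, identified with $\mathbb{Z}[1/k]\rtimes\mathbb{Z}$ (pairs $(y,m)$, $y\in\mathbb{Z}[1/k]=\{zk^i:z,i\in\mathbb{Z}\}$, $m\in\mathbb{Z}$, product $(y_1,m_1)(y_2,m_2)=(y_1+y_2k^{-m_1},m_1+m_2)$), with $a=(1,0)$, $b=(0,1)$. $A=\{(y,0): y\in\mathbb{Z}[1/k]\}$ is the normal closure of $a$; for $u=(y,0)\in A$ and $s\in\mathbb{Z}[1/k]$ write $u^s=(ys,0)$, so $A=\{a^y:y\in\mathbb{Z}[1/k]\}$. $A_1=\{a^y: y \text{ a unit of }\mathbb{Z}[1/k]\}$ and $Ab=\{a^yb: y\in\mathbb{Z}[1/k]\}$. *)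

(* BS(1,k) = Z[1/k] ⋊ Z realized inside rat * int. *)
From mathcomp Require Import all_boot all_order all_algebra.
Set Implicit Arguments. Unset Strict Implicit. Unset Printing Implicit Defensive.
Import Order.TTheory GRing.Theory Num.Theory.
Local Open Scope ring_scope.

Definition inZk (k : nat) (y : rat) : Prop :=
  exists (z i : int), y = z%:~R * (k%:R : rat) ^ i.

Definition unitZk (k : nat) (y : rat) : Prop :=
  inZk k y /\ exists w, inZk k w /\ y * w = 1.

Definition inBS (k : nat) (g : rat * int) : Prop := inZk k g.1.

Definition bsmul (k : nat) (g h : rat * int) : rat * int :=
  (g.1 + h.1 * (k%:R : rat) ^ (- g.2), g.2 + h.2).

Definition bs_a : rat * int := (1, 0).
Definition bs_b : rat * int := (0, 1).

Definition is_bs_aut (k : nat) (f : rat * int -> rat * int) : Prop :=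
  [/\ (forall g, inBS k g -> inBS k (f g)),
      (forall g h, inBS k g -> inBS k h -> f (bsmul k g h) = bsmul k (f g) (f h)),
      (forall g h, inBS k g -> inBS k h -> f g = f h -> g = h)
    & (forall h, inBS k h -> exists g, inBS k g /\ f g = h)].

From mathcomp Require Import all_boot all_order all_algebra.
From mathcomp Require Import ring.
Import Order.TTheory GRing.Theory Num.Theory.
Local Open Scope ring_scope.

Set Implicit Arguments.
Unset Strict Implicit.

(* Writing g = (y, m) = a^y b^m, the automorphism is a^y b^m |-> a^(u y) (a^v b)^m.
   Since (a^v b)^m = (v S(m), m) with S(m) = sum_(i < m) k^-i = (1 - k^-m) k/(k - 1),
   this is the affine map (y, m) |-> (u y + v S(m), m).  It is multiplicative
   because S is a crossed homomorphism, S(m + n) = S(m) + k^-m S(n); it preserves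
   Z[1/k] because S(m) lies in Z[1/k]; and, u being a unit of Z[1/k], it is
   inverted on BS(1,k) by (y, m) |-> (u^-1 (y - v S(m)), m). *)

Section ZInvK.
Variable k : nat.
Hypothesis k_gt0 : (0 < k)%N.
Local Notation K := (k%:R : rat).

Lemma natk_neq0 : K != 0.
Proof. by rewrite pnatr_eq0 -lt0n. Qed.

Lemma inZk_expz i : inZk k (K ^ i).
Proof. by exists 1, i; rewrite mul1r. Qed.

Lemma inZkN y : inZk k y -> inZk k (- y).
Proof. by case=> z [i ->]; exists (- z), i; rewrite intrN mulNr. Qed.

Lemma inZkM y w : inZk k y -> inZk k w -> inZk k (y * w).
Proof.
case=> z [i ->] [z' [j ->]]; exists (z * z'), (i + j).
by rewrite intrM expfzDr ?natk_neq0 //; ring.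
Qed.

Lemma inZkD y w : inZk k y -> inZk k w -> inZk k (y + w).
Proof.
case=> z [i ->] [z' [j ->]].
wlog le_ij : z z' i j / i <= j.
  move=> hwlog; case: (lerP i j) => [/hwlog //|/ltW /hwlog].
  by rewrite addrC.
have [n ->] : exists n : nat, j = i + n.
  by exists `|j - i|%N; rewrite abszE ger0_norm ?subr_ge0 // addrCA subrr addr0.
exists (z + z' * (k%:Z) ^+ n), i.
rewrite expfzDr ?natk_neq0 // -exprnP intrD intrM rmorphXn /=; ring.
Qed.

End ZInvK.

Section BSEndo.
Variable k : nat.
Hypothesis k_gt1 : (1 < k)%N.
Local Notation K := (k%:R : rat).

Let k_gt0 : (0 < k)%N. Proof. exact: ltnW. Qed.

Lemma natk_sub1_neq0 : K - 1 != 0.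
Proof. by rewrite subr_eq0 pnatr_eq1; case: k k_gt1 => [|[]]. Qed.

(* The closed form of sum_(i < m) k^-i, so that (a^v b)^m = (v * bs_geom m, m). *)
Definition bs_geom (m : int) : rat := (1 - K ^ (- m)) * K / (K - 1).

Lemma bs_geom0 : bs_geom 0 = 0.
Proof. by rewrite /bs_geom oppr0 expr0z subrr !mul0r. Qed.

Lemma bs_geom1 : bs_geom 1 = 1.
Proof.
rewrite /bs_geom exprN1.
by field; rewrite (natk_neq0 k_gt0) natk_sub1_neq0.
Qed.

Lemma bs_geomD m n : bs_geom (m + n) = bs_geom m + bs_geom n * K ^ (- m).
Proof.
rewrite /bs_geom opprD expfzDr ?(natk_neq0 k_gt0) //.
by field; rewrite natk_sub1_neq0.
Qed.

Lemma bs_geomS m : bs_geom (m + 1) = bs_geom m + K ^ (- m).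
Proof. by rewrite bs_geomD bs_geom1 mul1r. Qed.

Lemma inZk_bs_geom m : inZk k (bs_geom m).
Proof.
elim/int_rec: m => [|n hn|n hn].
- by rewrite bs_geom0; exists 0, 0; rewrite mul0r.
- by rewrite -addn1 PoszD bs_geomS; exact: (inZkD k_gt0 hn (inZk_expz k _)).
- have -> : bs_geom (- n.+1%:Z) = bs_geom (- n%:Z) - K ^ n.+1.
    by rewrite -[- n%:Z](subrK 1) -opprD -addn1 bs_geomS opprK addrK.
  exact: (inZkD k_gt0 hn (inZkN (inZk_expz k _))).
Qed.

Definition bs_endo (u v : rat) (g : rat * int) : rat * int :=
  (u * g.1 + v * bs_geom g.2, g.2).

Lemma bs_endoM u v g h :
  bs_endo u v (bsmul k g h) = bsmul k (bs_endo u v g) (bs_endo u v h).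
Proof. by rewrite /bs_endo /bsmul /= bs_geomD; congr (_, _); ring. Qed.

Lemma inBS_bs_endo u v g :
  inZk k u -> inZk k v -> inBS k g -> inBS k (bs_endo u v g).
Proof.
move=> hu hv hg.
exact: (inZkD k_gt0) (inZkM k_gt0 hu hg) (inZkM k_gt0 hv (inZk_bs_geom _)).
Qed.

Lemma bs_endo_inj u v : u != 0 -> injective (bs_endo u v).
Proof.
by move=> u_neq0 [g1 g2] [h1 h2] [] /[swap] <- /addIr /(mulfI u_neq0) ->.
Qed.

Lemma bs_endo_surj u v h :
  unitZk k u -> inZk k v -> inBS k h -> exists2 g, inBS k g & bs_endo u v g = h.
Proof.
case=> hu [w [hw uw]] hv; case: h => y m hy.
exists ((y - v * bs_geom m) * w, m).
  apply: (inZkM k_gt0) hw; apply: (inZkD k_gt0) hy (inZkN _).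
  exact: (inZkM k_gt0) hv (inZk_bs_geom m).
by rewrite /bs_endo /= mulrCA uw mulr1 subrK.
Qed.

Lemma bs_endo_aut u v : unitZk k u -> inZk k v -> is_bs_aut k (bs_endo u v).
Proof.
move=> hu hv; have [u_Zk [w [_ uw]]] := hu.
have u_neq0 : u != 0 by apply: contra_eq_neq uw => ->; rewrite mul0r.
split=> [g|g h _ _|g h _ _|h /(bs_endo_surj hu hv) [g]].
- exact: inBS_bs_endo.
- exact: bs_endoM.
- exact: bs_endo_inj.
- by exists g.
Qed.

Lemma bs_endo_a u v : bs_endo u v bs_a = (u, 0).
Proof. by rewrite /bs_endo /= mulr1 bs_geom0 mulr0 addr0. Qed.

Lemma bs_endo_b u v : bs_endo u v bs_b = (v, 1).
Proof. by rewrite /bs_endo /= mulr0 bs_geom1 mulr1 add0r. Qed.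

End BSEndo.

Theorem lemma4p1 (k : nat) (hk : (2 <= k)%N) (y1 y2 : rat) :
  unitZk k y1 -> inZk k y2 ->
  exists f : rat * int -> rat * int,
    [/\ is_bs_aut k f, f bs_a = (y1, 0%R) & f bs_b = (y2, 1%R)].
Proof.
move=> hy1 hy2; exists (bs_endo k y1 y2).
by split; [exact: bs_endo_aut | exact: bs_endo_a | exact: bs_endo_b].
Qed.
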